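(* Let $P$ be a path linkage with $k\ge2$ edges, all of positive length. Let $p\in M(P)$ and let $\alpha:[0,1]\to[P]$ be continuous with $\alpha(0)=\theta(p)$. Then there exists a continuous $\tilde\alpha:[0,1]\to M(P)$ with $\tilde\alpha(0)=p$ and $\theta\circ\tilde\alpha=\alpha$.
   Context: A path linkage is a linkage $P=(G,l)$ where $G$ is a path graph with vertices $1,\dots,k+1$ and edges $\{i,i+1\}$; its terminal vertices are $s=1$, $t=k+1$. $C(P)=\{p:V\to\mathbb R^2:|p(u)-p(v)|=l(\{u,v\})\text{ for every edge}\}$, and $M(P)$ is the quotient of $C(P)$ by the group of orientation preserving isometries of $\mathbb R^2$, with the quotient topology. $\theta:M(P)\to\mathbb R$, $\theta(p)=|p(s)-p(t)|$, and $[P]=\theta(M(P))$. *)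

From Stdlib Require Import Reals.
Open Scope R_scope.

Definition pt := (R * R)%type.
Definition dist2 (x y : pt) : R :=
  sqrt ((fst x - fst y) ^ 2 + (snd x - snd y) ^ 2).

(* A path linkage with k edges: vertices 0..k (paper: 1..k+1), edges {i,i+1}
   for i < k with length l i.  A placement is a map nat -> pt; only the values
   at 0..k are relevant. *)
Definition config := nat -> pt.

Definition inC (k : nat) (l : nat -> R) (p : config) : Prop :=
  forall i, (i < k)%nat -> dist2 (p i) (p (S i)) = l i.

Definition se2_act (c s b1 b2 : R) (x : pt) : pt :=
  (c * fst x - s * snd x + b1, s * fst x + c * snd x + b2).

(* p and q define the same point of M(P) *)
Definition congruent (k : nat) (p q : config) : Prop :=
  exists c s b1 b2, c ^ 2 + s ^ 2 = 1 /\
    forall i, (i <= k)%nat -> q i = se2_act c s b1 b2 (p i).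

Definition theta (k : nat) (p : config) : R := dist2 (p 0%nat) (p k).

Definition range_P (k : nat) (l : nat -> R) (r : R) : Prop :=
  exists q, inC k l q /\ theta k q = r.

(* U is an open subset of C(P) (subspace topology from (R^2)^(k+1)) *)
Definition openC (k : nat) (l : nat -> R) (U : config -> Prop) : Prop :=
  forall p, inC k l p -> U p -> exists eps, 0 < eps /\
    forall q, inC k l q -> (forall i, (i <= k)%nat -> dist2 (p i) (q i) < eps) -> U q.

Definition saturated (k : nat) (U : config -> Prop) : Prop :=
  forall p q, congruent k p q -> U p -> U q.

Definition open01 (A : R -> Prop) : Prop :=
  forall t, 0 <= t <= 1 -> A t -> exists d, 0 < d /\
    forall u, 0 <= u <= 1 -> Rabs (u - t) < d -> A u.

Definition cont01 (f : R -> R) : Prop :=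
  forall t, 0 <= t <= 1 -> forall eps, 0 < eps -> exists d, 0 < d /\
    forall u, 0 <= u <= 1 -> Rabs (u - t) < d -> Rabs (f u - f t) < eps.

(* A path [0,1] -> M(P), given by representatives f t in C(P), is continuous
   for the quotient topology: open sets of M(P) are exactly the images of
   saturated open subsets of C(P). *)
Definition contM (k : nat) (l : nat -> R) (f : R -> config) : Prop :=
  (forall t, 0 <= t <= 1 -> inC k l (f t)) /\
  forall U, openC k l U -> saturated k U -> open01 (fun t => U (f t)).

(* If some inner vertex [j] of [p] differs
   from both terminals, cut the chain there: pick continuous target distances
   [b1], [b2] for the two parts, starting at their current values and obeying the
   triangle inequalities with [alpha] (by clamping), lift both parts by induction
   and glue them with the rotation given by the law of cosines, the orientation
   of [p] choosing between the two solutions.  Otherwise every inner vertex lies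
   on a terminal, so the chain doubles back: the first and last edges have the
   common length [d = theta p], and an explicit folding of first edge, middle
   part and last edge realizes every distance in [[0, 2 d + L]], the middle part
   being lifted by induction.  Finally, a path of representatives that is
   continuous in every vertex is continuous into M(P). *)

From Stdlib Require Import Reals Lra Lia Psatz Classical.
Open Scope R_scope.

(** * Continuity on [[0, 1]] *)

Definition in01 (t : R) : Prop := 0 <= t <= 1.

Lemma cont01_iff_limit (f : R -> R) :
  cont01 f <-> forall t, in01 t -> limit1_in f in01 (f t) t.
Proof.
  unfold cont01, limit1_in, limit_in, in01; simpl; unfold Rdist; split.
  - intros H t Ht eps He. destruct (H t Ht eps He) as [d [Hd H']].
    exists d; split; [lra|]. intros x [Hx Hx']. apply H'; auto.
  - intros H t Ht eps He. destruct (H t Ht eps He) as [d [Hd H']].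
    exists d; split; [lra|]. intros x Hx Hx'. apply H'; auto.
Qed.

Lemma cont01_ext f g : (forall t, f t = g t) -> cont01 f -> cont01 g.
Proof.
  intros E H t Ht eps He. destruct (H t Ht eps He) as [d [Hd H']].
  exists d; split; auto. intros u Hu Hut. rewrite <- !E. auto.
Qed.

Lemma cont01_const c : cont01 (fun _ => c).
Proof.
  intros t Ht eps He; exists 1; split; [lra|].
  intros; unfold Rminus; rewrite Rplus_opp_r, Rabs_R0; lra.
Qed.

Lemma cont01_plus f g : cont01 f -> cont01 g -> cont01 (fun t => f t + g t).
Proof. rewrite !cont01_iff_limit; intros; apply limit_plus; auto. Qed.

Lemma cont01_opp f : cont01 f -> cont01 (fun t => - f t).
Proof. rewrite !cont01_iff_limit; intros; apply limit_Ropp; auto. Qed.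

Lemma cont01_minus f g : cont01 f -> cont01 g -> cont01 (fun t => f t - g t).
Proof. rewrite !cont01_iff_limit; intros; apply limit_minus; auto. Qed.

Lemma cont01_mult f g : cont01 f -> cont01 g -> cont01 (fun t => f t * g t).
Proof. rewrite !cont01_iff_limit; intros; apply limit_mul; auto. Qed.

Lemma cont01_inv f :
  cont01 f -> (forall t, in01 t -> f t <> 0) -> cont01 (fun t => / f t).
Proof. rewrite !cont01_iff_limit; intros; apply limit_inv; auto. Qed.

Lemma cont01_div f g :
  cont01 f -> cont01 g -> (forall t, in01 t -> g t <> 0) -> cont01 (fun t => f t / g t).
Proof. intros; apply cont01_mult; auto; apply cont01_inv; auto. Qed.

Lemma cont01_scal c f : cont01 f -> cont01 (fun t => c * f t).
Proof. intros; apply cont01_mult; auto; apply cont01_const. Qed.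

Lemma cont01_pow2 f : cont01 f -> cont01 (fun t => f t ^ 2).
Proof.
  intros H; apply (cont01_ext (fun t => f t * f t)); [intros; ring|].
  apply cont01_mult; auto.
Qed.

Lemma cont01_comp (g f : R -> R) :
  cont01 f -> (forall t, in01 t -> continuity_pt g (f t)) -> cont01 (fun t => g (f t)).
Proof.
  intros Hf Hg t Ht eps He.
  specialize (Hg t Ht).
  unfold continuity_pt, continue_in, limit1_in, limit_in in Hg; simpl in Hg; unfold Rdist in Hg.
  destruct (Hg eps He) as [d1 [Hd1 H1]].
  destruct (Hf t Ht d1 Hd1) as [d [Hd H2]].
  exists d; split; auto. intros u Hu Hut.
  destruct (Req_dec (f u) (f t)) as [E|E].
  - rewrite E; unfold Rminus; rewrite Rplus_opp_r, Rabs_R0; lra.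
  - apply H1. split; [split; [exact I | auto] | apply H2; auto].
Qed.

Lemma cont01_sqrt f :
  cont01 f -> (forall t, in01 t -> 0 <= f t) -> cont01 (fun t => sqrt (f t)).
Proof. intros; apply cont01_comp; auto; intros; apply continuity_pt_sqrt; auto. Qed.

Lemma cont01_abs f : cont01 f -> cont01 (fun t => Rabs (f t)).
Proof. intros; apply cont01_comp; auto; intros; apply Rcontinuity_abs. Qed.

Lemma cont01_max f g : cont01 f -> cont01 g -> cont01 (fun t => Rmax (f t) (g t)).
Proof.
  intros Hf Hg. apply (cont01_ext (fun t => (f t + g t + Rabs (f t - g t)) / 2)).
  - intros t; unfold Rmax; destruct (Rle_dec (f t) (g t));
      [rewrite Rabs_left1 | rewrite Rabs_right]; lra.
  - apply cont01_div; [| apply cont01_const | intros; lra].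
    apply cont01_plus; [apply cont01_plus; auto|]. apply cont01_abs, cont01_minus; auto.
Qed.

Lemma cont01_min f g : cont01 f -> cont01 g -> cont01 (fun t => Rmin (f t) (g t)).
Proof.
  intros Hf Hg. apply (cont01_ext (fun t => - Rmax (- f t) (- g t))).
  - intros t; unfold Rmax, Rmin; destruct (Rle_dec (f t) (g t)), (Rle_dec (- f t) (- g t)); lra.
  - apply cont01_opp, cont01_max; apply cont01_opp; auto.
Qed.

Lemma Rabs_le_inv u a : Rabs u <= a -> - a <= u <= a.
Proof. unfold Rabs; destruct (Rcase_abs u); lra. Qed.

Lemma Rmax_le_inv x y z : Rmax x y <= z -> x <= z /\ y <= z.
Proof. pose proof (Rmax_l x y); pose proof (Rmax_r x y); lra. Qed.

Lemma Rmin_ge_inv x y z : z <= Rmin x y -> z <= x /\ z <= y.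
Proof. pose proof (Rmin_l x y); pose proof (Rmin_r x y); lra. Qed.

Ltac cont01_tac :=
  repeat first [ assumption | apply cont01_const | apply cont01_plus | apply cont01_minus
               | apply cont01_opp | apply cont01_mult | apply cont01_pow2 | apply cont01_abs
               | apply cont01_max | apply cont01_min ].

Definition clamp (lo hi x : R) : R := Rmax lo (Rmin hi x).

Lemma clamp_bounds lo hi x : lo <= hi -> lo <= clamp lo hi x <= hi.
Proof. intros; unfold clamp; split; [apply Rmax_l | apply Rmax_lub; auto; apply Rmin_l]. Qed.

Lemma clamp_id lo hi x : lo <= x <= hi -> clamp lo hi x = x.
Proof. intros; unfold clamp; rewrite Rmin_right, Rmax_right; lra. Qed.

Lemma clamp_pos lo hi x : 0 < hi -> 0 < x -> 0 < clamp lo hi x.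
Proof.
  intros; unfold clamp; eapply Rlt_le_trans; [|apply Rmax_r]. apply Rmin_glb_lt; auto.
Qed.

Lemma cont01_clamp lo hi x :
  cont01 lo -> cont01 hi -> cont01 x -> cont01 (fun t => clamp (lo t) (hi t) (x t)).
Proof. intros; unfold clamp; cont01_tac. Qed.

(** * Plane geometry *)

Definition vadd (u v : pt) : pt := (fst u + fst v, snd u + snd v).
Definition vsub (u v : pt) : pt := (fst u - fst v, snd u - snd v).
Definition vscal (k : R) (v : pt) : pt := (k * fst v, k * snd v).
Definition rot (c s : R) (v : pt) : pt := (c * fst v - s * snd v, s * fst v + c * snd v).
Definition dot (u v : pt) : R := fst u * fst v + snd u * snd v.
Definition cross (u v : pt) : R := fst u * snd v - snd u * fst v.
Definition vnorm2 (v : pt) : R := fst v ^ 2 + snd v ^ 2.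
Definition vnorm (v : pt) : R := sqrt (vnorm2 v).

Lemma dist2_vnorm x y : dist2 x y = vnorm (vsub y x).
Proof. unfold dist2, vnorm, vnorm2, vsub; simpl; f_equal; ring. Qed.

Lemma dist2_self x : dist2 x x = 0.
Proof. unfold dist2. replace ((fst x - fst x) ^ 2 + (snd x - snd x) ^ 2) with 0 by ring. apply sqrt_0. Qed.

Lemma vnorm2_ge0 v : 0 <= vnorm2 v.
Proof. unfold vnorm2; nra. Qed.

Lemma vnorm_ge0 v : 0 <= vnorm v.
Proof. apply sqrt_pos. Qed.

Lemma vnorm_pow2 v : vnorm v ^ 2 = vnorm2 v.
Proof. unfold vnorm; rewrite pow2_sqrt; auto using vnorm2_ge0. Qed.

Lemma vnorm_eq v r : 0 <= r -> vnorm2 v = r ^ 2 -> vnorm v = r.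
Proof. intros H E; unfold vnorm; rewrite E; apply sqrt_pow2; auto. Qed.

Lemma vnorm_eq_vnorm2 u v : vnorm2 u = vnorm2 v -> vnorm u = vnorm v.
Proof. intros E; unfold vnorm; rewrite E; auto. Qed.

Lemma vnorm_eq0 v : vnorm v = 0 -> v = (0, 0).
Proof.
  intros H. assert (vnorm2 v = 0) by (rewrite <- vnorm_pow2, H; ring).
  unfold vnorm2 in *; destruct v; simpl in *; f_equal; nra.
Qed.

Lemma vnorm_vsub_pos u v : u <> v -> 0 < vnorm (vsub u v).
Proof.
  intros H. destruct (Rle_lt_dec (vnorm (vsub u v)) 0) as [Hle|]; auto.
  pose proof (vnorm_ge0 (vsub u v)).
  assert (E : vsub u v = (0, 0)) by (apply vnorm_eq0; lra).
  exfalso; apply H. destruct u, v; unfold vsub in E; simpl in E.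
  injection E; intros; f_equal; lra.
Qed.

Lemma lagrange_identity u v : dot u v ^ 2 + cross u v ^ 2 = vnorm2 u * vnorm2 v.
Proof. unfold dot, cross, vnorm2; ring. Qed.

Lemma vnorm_add_le u v : vnorm (vadd u v) <= vnorm u + vnorm v.
Proof.
  pose proof (vnorm_ge0 u); pose proof (vnorm_ge0 v); pose proof (vnorm_ge0 (vadd u v)).
  assert (Hdot : dot u v <= vnorm u * vnorm v).
  { pose proof (lagrange_identity u v) as L.
    rewrite <- (vnorm_pow2 u), <- (vnorm_pow2 v) in L.
    pose proof (pow2_ge_0 (cross u v)).
    assert (0 <= vnorm u * vnorm v) by (apply Rmult_le_pos; auto).
    destruct (Rle_lt_dec (dot u v) (vnorm u * vnorm v)); nra. }
  assert (E : vnorm (vadd u v) ^ 2 = vnorm u ^ 2 + vnorm v ^ 2 + 2 * dot u v).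
  { rewrite !vnorm_pow2; unfold vnorm2, vadd, dot; simpl; ring. }
  nra.
Qed.

Lemma vnorm_add_ge u v : Rabs (vnorm u - vnorm v) <= vnorm (vadd u v).
Proof.
  assert (Hu : u = vadd (vadd u v) (vscal (-1) v))
    by (unfold vadd, vscal; destruct u, v; simpl; f_equal; ring).
  assert (Hv : v = vadd (vadd u v) (vscal (-1) u))
    by (unfold vadd, vscal; destruct u, v; simpl; f_equal; ring).
  pose proof (vnorm_add_le (vadd u v) (vscal (-1) v)) as A.
  pose proof (vnorm_add_le (vadd u v) (vscal (-1) u)) as B.
  rewrite <- Hu in A; rewrite <- Hv in B.
  assert (Nv : vnorm (vscal (-1) v) = vnorm v)
    by (apply vnorm_eq_vnorm2; unfold vnorm2, vscal; simpl; ring).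
  assert (Nu : vnorm (vscal (-1) u) = vnorm u)
    by (apply vnorm_eq_vnorm2; unfold vnorm2, vscal; simpl; ring).
  apply Rabs_le; lra.
Qed.

Lemma vnorm2_rot c s v : vnorm2 (rot c s v) = (c ^ 2 + s ^ 2) * vnorm2 v.
Proof. unfold vnorm2, rot; simpl; ring. Qed.

Lemma vnorm_rot c s v : c ^ 2 + s ^ 2 = 1 -> vnorm (rot c s v) = vnorm v.
Proof. intros H; apply vnorm_eq_vnorm2; rewrite vnorm2_rot, H; ring. Qed.

Lemma vnorm2_scal k v : vnorm2 (vscal k v) = k ^ 2 * vnorm2 v.
Proof. unfold vnorm2, vscal; simpl; ring. Qed.

Lemma vnorm2_unit v b : vnorm v = b -> 0 < b -> vnorm2 (vscal (/ b) v) = 1.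
Proof. intros H Hb; rewrite vnorm2_scal, <- vnorm_pow2, H; field; lra. Qed.

Lemma rot_1_0 v : rot 1 0 v = v.
Proof. unfold rot; destruct v; simpl; f_equal; ring. Qed.

Lemma rot_scal c s k v : rot c s (vscal k v) = vscal k (rot c s v).
Proof. unfold rot, vscal; simpl; f_equal; ring. Qed.

Lemma rot_dot_cross u v : rot (dot u v) (cross u v) u = vscal (vnorm2 u) v.
Proof. unfold rot, dot, cross, vnorm2, vscal; simpl; f_equal; ring. Qed.

Lemma vscal_1 v : vscal 1 v = v.
Proof. unfold vscal; destruct v; simpl; f_equal; ring. Qed.

Lemma vscal_vscal a b v : vscal a (vscal b v) = vscal (a * b) v.
Proof. unfold vscal; simpl; f_equal; ring. Qed.

Lemma vscal_Vr v b : b <> 0 -> vscal b (vscal (/ b) v) = v.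
Proof. intros; rewrite vscal_vscal, Rinv_r, vscal_1; auto. Qed.

Definition cont01_pt (f : R -> pt) : Prop :=
  cont01 (fun t => fst (f t)) /\ cont01 (fun t => snd (f t)).

Lemma cont01_pt_ext f g : (forall t, f t = g t) -> cont01_pt f -> cont01_pt g.
Proof.
  intros E [H1 H2]; split;
    [apply (cont01_ext (fun t => fst (f t))) | apply (cont01_ext (fun t => snd (f t)))];
    auto; intros; rewrite E; auto.
Qed.

Lemma cont01_pt_const v : cont01_pt (fun _ => v).
Proof. split; apply cont01_const. Qed.

Lemma cont01_vadd f g : cont01_pt f -> cont01_pt g -> cont01_pt (fun t => vadd (f t) (g t)).
Proof. intros [] []; split; simpl; apply cont01_plus; auto. Qed.

Lemma cont01_vsub f g : cont01_pt f -> cont01_pt g -> cont01_pt (fun t => vsub (f t) (g t)).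
Proof. intros [] []; split; simpl; apply cont01_minus; auto. Qed.

Lemma cont01_vscal k f : cont01 k -> cont01_pt f -> cont01_pt (fun t => vscal (k t) (f t)).
Proof. intros ? []; split; simpl; apply cont01_mult; auto. Qed.

Lemma cont01_rot c s f :
  cont01 c -> cont01 s -> cont01_pt f -> cont01_pt (fun t => rot (c t) (s t) (f t)).
Proof.
  intros ? ? []; split; simpl;
    [apply cont01_minus | apply cont01_plus]; apply cont01_mult; auto.
Qed.

Lemma cont01_dot f g : cont01_pt f -> cont01_pt g -> cont01 (fun t => dot (f t) (g t)).
Proof. intros [] []; unfold dot; apply cont01_plus; apply cont01_mult; auto. Qed.

Lemma cont01_cross f g : cont01_pt f -> cont01_pt g -> cont01 (fun t => cross (f t) (g t)).
Proof. intros [] []; unfold cross; apply cont01_minus; apply cont01_mult; auto. Qed.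

(* [cos_law b L r] is the cosine of the angle between [w] and [e] when
   [|w| = b], [|e| = L] and [|w + e| = r]. *)
Definition cos_law (b L r : R) : R := (r ^ 2 - b ^ 2 - L ^ 2) / (2 * b * L).

Lemma cos_law_bound b L r :
  0 < b -> 0 < L -> Rabs (b - L) <= r <= b + L -> -1 <= cos_law b L r <= 1.
Proof.
  intros Hb HL [H1 H2]. unfold cos_law.
  assert (0 <= r) by (pose proof (Rabs_pos (b - L)); lra).
  assert ((b - L) ^ 2 <= r ^ 2) by (apply Rabs_le_inv in H1; nra).
  assert (r ^ 2 <= (b + L) ^ 2) by nra.
  assert (0 < 2 * b * L) by nra.
  set (c := (r ^ 2 - b ^ 2 - L ^ 2) / (2 * b * L)).
  assert (c * (2 * b * L) = r ^ 2 - b ^ 2 - L ^ 2) by (unfold c; field; lra).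
  split; nra.
Qed.

Lemma one_minus_pow2_ge0 c : -1 <= c <= 1 -> 0 <= 1 - c ^ 2.
Proof. intros; nra. Qed.

Lemma cos_sqrt_pow2 c : -1 <= c <= 1 -> c ^ 2 + sqrt (1 - c ^ 2) ^ 2 = 1.
Proof. intros; rewrite pow2_sqrt; [ring | apply one_minus_pow2_ge0; auto]. Qed.

Lemma vnorm2_add_rot_cos_law w b L r c s :
  vnorm w = b -> 0 < b -> 0 < L -> c ^ 2 + s ^ 2 = 1 -> c = cos_law b L r ->
  vnorm2 (vadd w (vscal (L / b) (rot c s w))) = r ^ 2.
Proof.
  intros Hw Hb HL Hcs Hc.
  assert (Hn : vnorm2 w = b ^ 2) by (rewrite <- Hw, vnorm_pow2; auto).
  transitivity (vnorm2 w * (1 + 2 * (L / b) * c + (L / b) ^ 2 * (c ^ 2 + s ^ 2))).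
  { unfold vnorm2, vadd, vscal, rot; simpl; ring. }
  rewrite Hcs, Hn, Hc; unfold cos_law; field; lra.
Qed.

Lemma exists_edge_reach w b L r :
  vnorm w = b -> 0 < L -> Rabs (b - L) <= r <= b + L ->
  exists e, vnorm e = L /\ vnorm (vadd w e) = r.
Proof.
  intros Hw HL Hr. pose proof (vnorm_ge0 w) as Hb0; rewrite Hw in Hb0.
  assert (0 <= r) by (pose proof (Rabs_pos (b - L)); lra).
  destruct (Req_dec b 0) as [->|Hb].
  - assert (w = (0, 0)) by (apply vnorm_eq0; auto). subst w.
    rewrite Rminus_0_l, Rabs_Ropp, Rabs_right in Hr by lra.
    assert (r = L) by lra. subst r.
    exists (L, 0); split; apply vnorm_eq; try lra; unfold vnorm2, vadd; simpl; ring.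
  - assert (Hbp : 0 < b) by lra.
    pose proof (cos_law_bound b L r Hbp HL Hr) as Hc.
    set (c := cos_law b L r) in *. set (s := sqrt (1 - c ^ 2)).
    assert (Hcs : c ^ 2 + s ^ 2 = 1) by (apply cos_sqrt_pow2; auto).
    exists (vscal (L / b) (rot c s w)); split.
    + apply vnorm_eq; [lra|].
      rewrite vnorm2_scal, vnorm2_rot, Hcs, <- vnorm_pow2, Hw; field; lra.
    + apply vnorm_eq; auto. apply vnorm2_add_rot_cos_law with (r := r); auto.
Qed.

(* for [|v| = b], the rotation taking the direction of [v] to the unit vector [D] *)
Definition rot_onto (v : pt) (b : R) (D : pt) : R * R :=
  (dot (vscal (/ b) v) D, cross (vscal (/ b) v) D).

Lemma rot_onto_spec v b D :
  vnorm v = b -> 0 < b -> vnorm2 D = 1 ->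
  let cs := rot_onto v b D in
  fst cs ^ 2 + snd cs ^ 2 = 1 /\ rot (fst cs) (snd cs) v = vscal b D.
Proof.
  intros Hv Hb HD. unfold rot_onto; cbn [fst snd].
  set (u := vscal (/ b) v). assert (Hu : vnorm2 u = 1) by (apply vnorm2_unit; auto).
  split; [rewrite lagrange_identity, Hu, HD; ring|].
  rewrite <- (vscal_Vr v b) by lra. fold u. rewrite rot_scal, rot_dot_cross, Hu, vscal_1; auto.
Qed.

Lemma rot_onto_self v b : vnorm v = b -> 0 < b -> rot_onto v b (vscal (/ b) v) = (1, 0).
Proof.
  intros Hv Hb. unfold rot_onto. rewrite <- (vnorm2_unit v b Hv Hb).
  unfold dot, cross, vnorm2; f_equal; ring.
Qed.

Lemma cont01_rot_onto v b D :
  cont01_pt v -> cont01 b -> (forall t, in01 t -> 0 < b t) -> cont01_pt D ->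
  cont01_pt (fun t => rot_onto (v t) (b t) (D t)).
Proof.
  intros Hv Hb Hbp HD.
  assert (Cu : cont01_pt (fun t => vscal (/ b t) (v t))).
  { apply cont01_vscal; auto. apply cont01_inv; auto. intros t Ht; specialize (Hbp t Ht); lra. }
  split; [apply cont01_dot | apply cont01_cross]; auto.
Qed.

(* The rotation turning [b] so that [|a + rot b| = al], given [|a| = x], [|b| = y]
   and the triangle inequalities; [sg] selects one of the two solutions. *)
Definition align (a b : pt) (x y al sg : R) : R * R :=
  let c := cos_law x y al in
  rot_onto b y (rot c (sg * sqrt (1 - c ^ 2)) (vscal (/ x) a)).

Lemma align_spec a b x y al sg :
  vnorm a = x -> vnorm b = y -> 0 < x -> 0 < y ->
  Rabs (x - y) <= al <= x + y -> sg ^ 2 = 1 ->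
  let cs := align a b x y al sg in
  fst cs ^ 2 + snd cs ^ 2 = 1 /\ vnorm (vadd a (rot (fst cs) (snd cs) b)) = al.
Proof.
  intros Ha Hb Hx Hy Htr Hsg. unfold align.
  pose proof (cos_law_bound x y al Hx Hy Htr) as Hc.
  set (c := cos_law x y al) in *. set (s := sg * sqrt (1 - c ^ 2)).
  assert (Hcs : c ^ 2 + s ^ 2 = 1)
    by (unfold s; rewrite Rpow_mult_distr, Hsg, Rmult_1_l; apply cos_sqrt_pow2; auto).
  assert (HD : vnorm2 (rot c s (vscal (/ x) a)) = 1)
    by (rewrite vnorm2_rot, Hcs, Rmult_1_l; apply vnorm2_unit; auto).
  destruct (rot_onto_spec b y _ Hb Hy HD) as [Hrot Hb']. split; auto.
  rewrite Hb', rot_scal, vscal_vscal.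
  apply vnorm_eq; [pose proof (Rabs_pos (x - y)); lra|].
  replace (y * / x) with (y / x) by (unfold Rdiv; ring).
  apply vnorm2_add_rot_cos_law; auto.
Qed.

Definition orientation (a b : pt) : R := if Rle_dec 0 (cross a b) then 1 else -1.

Lemma orientation_pow2 a b : orientation a b ^ 2 = 1.
Proof. unfold orientation; destruct (Rle_dec _ _); ring. Qed.

Lemma align_actual a b x y :
  vnorm a = x -> vnorm b = y -> 0 < x -> 0 < y ->
  align a b x y (vnorm (vadd a b)) (orientation a b) = (1, 0).
Proof.
  intros Ha Hb Hx Hy.
  set (ah := vscal (/ x) a). set (bh := vscal (/ y) b).
  assert (Hah : vnorm2 ah = 1) by (apply vnorm2_unit; auto).
  assert (Hbh : vnorm2 bh = 1) by (apply vnorm2_unit; auto).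
  assert (Hc : cos_law x y (vnorm (vadd a b)) = dot ah bh).
  { unfold cos_law. rewrite vnorm_pow2.
    assert (vnorm2 a = x ^ 2) by (rewrite <- vnorm_pow2, Ha; auto).
    assert (vnorm2 b = y ^ 2) by (rewrite <- vnorm_pow2, Hb; auto).
    assert (E1 : vnorm2 (vadd a b) = vnorm2 a + vnorm2 b + 2 * dot a b)
      by (unfold vnorm2, vadd, dot; simpl; ring).
    assert (E2 : dot ah bh = / x * / y * dot a b) by (unfold ah, bh, dot, vscal; simpl; ring).
    rewrite E1, E2, H, H0; field; lra. }
  assert (Hs : orientation a b * sqrt (1 - dot ah bh ^ 2) = cross ah bh).
  { assert (E : 1 - dot ah bh ^ 2 = Rsqr (cross ah bh)).
    { pose proof (lagrange_identity ah bh). rewrite Hah, Hbh in H. unfold Rsqr; lra. }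
    rewrite E, sqrt_Rsqr_abs.
    assert (Ecr : cross ah bh = / x * / y * cross a b) by (unfold ah, bh, cross, vscal; simpl; ring).
    assert (0 < / x * / y) by (apply Rmult_lt_0_compat; apply Rinv_0_lt_compat; auto).
    unfold orientation; rewrite Ecr; destruct (Rle_dec 0 (cross a b)).
    - rewrite Rabs_right by nra; ring.
    - rewrite Rabs_left by nra; ring. }
  unfold align. rewrite Hc. fold ah. rewrite Hs, rot_dot_cross, Hah, vscal_1.
  apply rot_onto_self; auto.
Qed.

Lemma cont01_cos_law x y al :
  cont01 x -> cont01 y -> cont01 al -> (forall t, in01 t -> 0 < x t /\ 0 < y t) ->
  cont01 (fun t => cos_law (x t) (y t) (al t)).
Proof.
  intros Hx Hy Hal Hpos. unfold cos_law. apply cont01_div.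
  - apply cont01_minus; [apply cont01_minus|]; apply cont01_pow2; auto.
  - apply cont01_mult; [apply cont01_scal|]; auto.
  - intros t Ht. destruct (Hpos t Ht). assert (0 < 2 * x t * y t) by nra. lra.
Qed.

Lemma cont01_align a b x y al sg :
  cont01_pt a -> cont01_pt b -> cont01 x -> cont01 y -> cont01 al ->
  (forall t, in01 t -> 0 < x t /\ 0 < y t) ->
  (forall t, in01 t -> -1 <= cos_law (x t) (y t) (al t) <= 1) ->
  cont01_pt (fun t => align (a t) (b t) (x t) (y t) (al t) sg).
Proof.
  intros Ha Hb Hx Hy Hal Hpos Hc. unfold align.
  assert (Hcc := cont01_cos_law x y al Hx Hy Hal Hpos).
  apply cont01_rot_onto; auto; [intros; apply Hpos; auto|].
  apply cont01_rot; auto.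
  - apply cont01_scal, cont01_sqrt; [cont01_tac | intros; apply one_minus_pow2_ge0; auto].
  - apply cont01_vscal; auto. apply cont01_inv; auto. intros t Ht; specialize (Hpos t Ht); lra.
Qed.

(** * Gluing chains *)

Lemma theta_vnorm n p : theta n p = vnorm (vsub (p n) (p 0%nat)).
Proof. apply dist2_vnorm. Qed.

Definition shiftl (j : nat) (l : nat -> R) : nat -> R := fun i => l (i + j)%nat.
Definition shiftp (j : nat) (p : config) : config := fun i => p (i + j)%nat.

Lemma theta_shiftp n j p : theta n (shiftp j p) = vnorm (vsub (p (n + j)%nat) (p j)).
Proof. apply dist2_vnorm. Qed.

Lemma inC_prefix n j l p : (j <= n)%nat -> inC n l p -> inC j l p.
Proof. intros H HC i Hi; apply HC; lia. Qed.

Lemma inC_suffix n j l p : (j <= n)%nat -> inC n l p -> inC (n - j) (shiftl j l) (shiftp j p).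
Proof.
  intros H HC i Hi; unfold shiftl, shiftp.
  replace (S i + j)%nat with (S (i + j)) by lia. apply HC; lia.
Qed.

Definition glue (nA : nat) (qA qB : config) (c s : R) : config :=
  fun i => if (i <=? nA)%nat then qA i
           else vadd (qA nA) (rot c s (vsub (qB (i - nA)%nat) (qB 0%nat))).

Lemma glue_le nA qA qB c s i : (i <= nA)%nat -> glue nA qA qB c s i = qA i.
Proof. intros H; unfold glue; rewrite (proj2 (Nat.leb_le _ _) H); auto. Qed.

Lemma glue_gt nA qA qB c s i : (nA < i)%nat ->
  glue nA qA qB c s i = vadd (qA nA) (rot c s (vsub (qB (i - nA)%nat) (qB 0%nat))).
Proof. intros H; unfold glue; rewrite (proj2 (Nat.leb_gt _ _) H); auto. Qed.

Lemma glue_inC nA nB l qA qB c s :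
  c ^ 2 + s ^ 2 = 1 -> inC nA l qA -> inC nB (shiftl nA l) qB ->
  inC (nA + nB) l (glue nA qA qB c s).
Proof.
  intros Hcs HA HB i Hi.
  destruct (Nat.lt_ge_cases i nA); [rewrite !glue_le by lia; apply HA; auto|].
  rewrite (glue_gt _ _ _ _ _ (S i)) by lia.
  replace (S i - nA)%nat with (S (i - nA)) by lia.
  assert (E : dist2 (qB (i - nA)%nat) (qB (S (i - nA))) = l i).
  { pose proof (HB (i - nA)%nat ltac:(lia)) as E; unfold shiftl in E.
    rewrite Nat.sub_add in E by lia; exact E. }
  rewrite <- E, !dist2_vnorm.
  rewrite <- (vnorm_rot c s (vsub (qB (S (i - nA))) (qB (i - nA)%nat))) by auto.
  destruct (Nat.eq_dec i nA) as [->|].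
  - rewrite glue_le, Nat.sub_diag by lia.
    f_equal; unfold vsub, vadd, rot; simpl; f_equal; ring.
  - rewrite glue_gt by lia. f_equal; unfold vsub, vadd, rot; simpl; f_equal; ring.
Qed.

Lemma glue_theta nA nB qA qB c s : (1 <= nB)%nat ->
  theta (nA + nB) (glue nA qA qB c s) =
  vnorm (vadd (vsub (qA nA) (qA 0%nat)) (rot c s (vsub (qB nB) (qB 0%nat)))).
Proof.
  intros H. rewrite theta_vnorm, (glue_le _ _ _ _ _ 0), glue_gt by lia.
  replace (nA + nB - nA)%nat with nB by lia.
  f_equal; unfold vsub, vadd; simpl; f_equal; ring.
Qed.

Lemma glue_1_0 nA nB p qA qB :
  (forall i, (i <= nA)%nat -> qA i = p i) -> (forall i, (i <= nB)%nat -> qB i = p (i + nA)%nat) ->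
  forall i, (i <= nA + nB)%nat -> glue nA qA qB 1 0 i = p i.
Proof.
  intros HA HB i Hi. destruct (Nat.le_gt_cases i nA); [rewrite glue_le; auto|].
  rewrite glue_gt, rot_1_0, HA, !HB by lia. replace (i - nA + nA)%nat with i by lia.
  simpl (0 + nA)%nat. unfold vadd, vsub; simpl; destruct (p i); simpl; f_equal; ring.
Qed.

Definition cpath (n : nat) (l : nat -> R) (q : R -> config) : Prop :=
  (forall t, in01 t -> inC n l (q t)) /\ forall i, (i <= n)%nat -> cont01_pt (fun t => q t i).

Lemma cpath_const n l p : inC n l p -> cpath n l (fun _ => p).
Proof. intros; split; auto; intros; apply cont01_pt_const. Qed.

Lemma cpath_glue nA nB l qA qB c s :
  cpath nA l qA -> cpath nB (shiftl nA l) qB -> cont01 c -> cont01 s ->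
  (forall t, in01 t -> c t ^ 2 + s t ^ 2 = 1) ->
  cpath (nA + nB) l (fun t => glue nA (qA t) (qB t) (c t) (s t)).
Proof.
  intros [CA PA] [CB PB] Hc Hs Hcs. split; [intros; apply glue_inC; auto|].
  intros i Hi. destruct (Nat.le_gt_cases i nA).
  - apply (cont01_pt_ext (fun t => qA t i)); [intros; rewrite glue_le; auto | apply PA; auto].
  - apply (cont01_pt_ext (fun t => vadd (qA t nA) (rot (c t) (s t) (vsub (qB t (i - nA)%nat) (qB t 0%nat))))).
    + intros; rewrite glue_gt; auto.
    + apply cont01_vadd; [apply PA; auto|].
      apply cont01_rot; auto; apply cont01_vsub; apply PB; lia.
Qed.

Lemma finite_uniform_delta (k : nat) (P : nat -> R -> Prop) :
  (forall i d d', 0 < d' <= d -> P i d -> P i d') ->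
  (forall i, (i <= k)%nat -> exists d, 0 < d /\ P i d) ->
  exists d, 0 < d /\ forall i, (i <= k)%nat -> P i d.
Proof.
  intros Mon. induction k as [|k IH]; intros H.
  - destruct (H 0%nat (le_n 0)) as [d [Hd HP]].
    exists d; split; auto. intros i Hi. replace i with 0%nat by lia; auto.
  - destruct IH as [d1 [Hd1 H1]]; [intros; apply H; lia|].
    destruct (H (S k) (le_n _)) as [d2 [Hd2 H2]].
    assert (Hd : 0 < Rmin d1 d2) by (apply Rmin_glb_lt; auto).
    exists (Rmin d1 d2); split; [exact Hd|]. intros i Hi.
    destruct (Nat.eq_dec i (S k)) as [->|].
    + apply Mon with d2; auto. split; auto; apply Rmin_r.
    + apply Mon with d1; [split; auto; apply Rmin_l | apply H1; lia].
Qed.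

Lemma dist2_lt x y e :
  Rabs (fst y - fst x) < e / 2 -> Rabs (snd y - snd x) < e / 2 -> dist2 x y < e.
Proof.
  intros H1 H2. unfold dist2.
  set (a := fst x - fst y) in *. set (b := snd x - snd y) in *.
  rewrite <- Rabs_Ropp, Ropp_minus_distr in H1, H2. fold a b in H1, H2.
  pose proof (Rabs_pos a); pose proof (Rabs_pos b).
  apply Rle_lt_trans with (Rabs a + Rabs b); [|lra].
  rewrite <- (sqrt_pow2 (Rabs a + Rabs b)) by lra.
  apply sqrt_le_1_alt. rewrite <- (pow2_abs a), <- (pow2_abs b).
  assert (0 <= Rabs a * Rabs b) by (apply Rmult_le_pos; auto). nra.
Qed.

Lemma cpath_contM k l q : cpath k l q -> contM k l q.
Proof.
  intros [HC Hp]. split; auto. intros U HU _ t Ht HUt.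
  destruct (HU (q t) (HC t Ht) HUt) as [eps [He HUe]].
  destruct (finite_uniform_delta k
    (fun i d => forall u, in01 u -> Rabs (u - t) < d -> dist2 (q t i) (q u i) < eps))
    as [d [Hd Hall]].
  - intros i d d' Hd' HP u Hu Hut. apply HP; auto. lra.
  - intros i Hi. destruct (Hp i Hi) as [H1 H2].
    assert (He2 : 0 < eps / 2) by lra.
    destruct (H1 t Ht _ He2) as [d1 [Hd1 Hd1']]. destruct (H2 t Ht _ He2) as [d2 [Hd2 Hd2']].
    exists (Rmin d1 d2). split; [apply Rmin_glb_lt; auto|].
    intros u Hu Hut. pose proof (Rmin_l d1 d2); pose proof (Rmin_r d1 d2).
    apply dist2_lt; [apply Hd1' | apply Hd2']; auto; lra.
  - exists d; split; [exact Hd|]. intros u Hu Hut. apply HUe; [apply HC; auto|].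
    intros i Hi; apply Hall; auto.
Qed.

(** * End-to-end distances *)

Definition lengths_pos (n : nat) (l : nat -> R) : Prop := forall i, (i < n)%nat -> 0 < l i.

Lemma lengths_pos_le n m l : (m <= n)%nat -> lengths_pos n l -> lengths_pos m l.
Proof. intros H Hl i Hi; apply Hl; lia. Qed.

Lemma lengths_pos_shiftl n j l : (j <= n)%nat -> lengths_pos n l -> lengths_pos (n - j) (shiftl j l).
Proof. intros H Hl i Hi; apply Hl; lia. Qed.

Fixpoint total_length (n : nat) (l : nat -> R) : R :=
  match n with O => 0 | S n => total_length n l + l n end.

(* Appending an edge of length [l n] to a chain whose end-to-end distances fill
   [[m, L]] gives the distances [[max (0, m - l n, l n - L), L + l n]]. *)
Fixpoint min_reach (n : nat) (l : nat -> R) : R :=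
  match n with
  | O => 0
  | S n => Rmax 0 (Rmax (min_reach n l - l n) (l n - total_length n l))
  end.

Lemma total_length_add a b l : total_length (a + b) l = total_length a l + total_length b (shiftl a l).
Proof.
  induction b as [|b IH]; simpl; [rewrite Nat.add_0_r; ring|].
  rewrite Nat.add_succ_r; simpl. rewrite IH. unfold shiftl. rewrite (Nat.add_comm b a). ring.
Qed.

Lemma min_reach_bounds n l : lengths_pos n l -> 0 <= min_reach n l <= total_length n l.
Proof.
  induction n as [|n IH]; simpl; intros Hl; [lra|].
  pose proof (Hl n (Nat.lt_succ_diag_r n)).
  pose proof (IH (lengths_pos_le (S n) n l (Nat.le_succ_diag_r n) Hl)).
  split; [apply Rmax_l | apply Rmax_lub; [lra | apply Rmax_lub; lra]].
Qed.

Lemma theta_split n j q :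
  theta n q = vnorm (vadd (vsub (q j) (q 0%nat)) (vsub (q n) (q j))).
Proof. rewrite theta_vnorm; f_equal; unfold vadd, vsub; simpl; f_equal; ring. Qed.

Lemma theta_bounds n l q :
  lengths_pos n l -> inC n l q -> min_reach n l <= theta n q <= total_length n l.
Proof.
  induction n as [|n IH]; intros Hl Hq.
  - unfold theta; rewrite dist2_self; simpl; lra.
  - assert (Hl' := lengths_pos_le (S n) n l (Nat.le_succ_diag_r n) Hl).
    pose proof (Hl n (Nat.lt_succ_diag_r n)).
    destruct (IH Hl' (inC_prefix (S n) n l q (Nat.le_succ_diag_r n) Hq)) as [Hm HL].
    assert (He : vnorm (vsub (q (S n)) (q n)) = l n)
      by (rewrite <- dist2_vnorm; apply Hq; lia).
    rewrite theta_vnorm in Hm, HL.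
    rewrite (theta_split (S n) n q).
    pose proof (vnorm_add_le (vsub (q n) (q 0%nat)) (vsub (q (S n)) (q n))).
    pose proof (vnorm_add_ge (vsub (q n) (q 0%nat)) (vsub (q (S n)) (q n))) as G.
    apply Rabs_le_inv in G. rewrite He in *. simpl.
    split; [|lra].
    apply Rmax_lub; [apply vnorm_ge0 | apply Rmax_lub; lra].
Qed.

Definition edge_config (e : pt) : config := fun i => match i with O => (0, 0) | _ => e end.

Lemma range_P_of_bounds n l r :
  lengths_pos n l -> min_reach n l <= r <= total_length n l -> range_P n l r.
Proof.
  revert r; induction n as [|n IH]; intros r Hl Hr.
  - simpl in Hr. exists (fun _ => (0, 0)). split; [intros i Hi; lia|].
    unfold theta; rewrite dist2_self; lra.
  - assert (Hl' := lengths_pos_le (S n) n l (Nat.le_succ_diag_r n) Hl).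
    pose proof (Hl n (Nat.lt_succ_diag_r n)) as Hln.
    pose proof (min_reach_bounds n l Hl').
    simpl in Hr.
    pose proof (Rmax_l 0 (Rmax (min_reach n l - l n) (l n - total_length n l))).
    pose proof (Rmax_r 0 (Rmax (min_reach n l - l n) (l n - total_length n l))).
    pose proof (Rmax_l (min_reach n l - l n) (l n - total_length n l)).
    pose proof (Rmax_r (min_reach n l - l n) (l n - total_length n l)).
    set (b := Rmax (min_reach n l) (Rabs (r - l n))).
    assert (Hb : min_reach n l <= b <= total_length n l).
    { split; [apply Rmax_l | apply Rmax_lub; [lra | apply Rabs_le; lra]]. }
    assert (Hbr : Rabs (b - l n) <= r <= b + l n).
    { unfold b, Rmax; destruct (Rle_dec _ _); split; try apply Rabs_le;
        unfold Rabs in *; destruct (Rcase_abs (r - l n)); lra. }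
    destruct (IH b Hl' Hb) as [q [Hq Hqb]].
    rewrite theta_vnorm in Hqb.
    destruct (exists_edge_reach (vsub (q n) (q 0%nat)) b (l n) r) as [e [He1 He2]]; auto.
    exists (glue n q (edge_config e) 1 0). rewrite <- Nat.add_1_r. split.
    + apply glue_inC; auto; [ring|]. intros i Hi. replace i with 0%nat by lia.
      unfold shiftl; simpl. rewrite dist2_vnorm, <- He1.
      unfold edge_config, vsub; destruct e; simpl; f_equal; f_equal; ring.
    + rewrite glue_theta, rot_1_0, <- He2 by lia. unfold edge_config.
      f_equal; unfold vsub, vadd; simpl; f_equal; ring.
Qed.

Lemma range_P_iff n l r :
  lengths_pos n l -> range_P n l r <-> min_reach n l <= r <= total_length n l.
Proof.
  intros Hl; split; [intros [q [Hq <-]]; apply theta_bounds; auto | apply range_P_of_bounds; auto].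
Qed.

(** * Lifting paths *)

Definition lifts (n : nat) (l : nat -> R) (p : config) (alpha : R -> R) (q : R -> config) : Prop :=
  cpath n l q /\ (forall i, (i <= n)%nat -> q 0 i = p i) /\
  (forall t, in01 t -> theta n (q t) = alpha t).

Definition liftable (n : nat) : Prop :=
  forall l p alpha, lengths_pos n l -> inC n l p -> cont01 alpha ->
  (forall t, in01 t -> range_P n l (alpha t)) -> alpha 0 = theta n p ->
  exists q, lifts n l p alpha q.

Lemma liftable_1 : liftable 1.
Proof.
  intros l p alpha Hl Hp Ha Hr H0. exists (fun _ => p).
  split; [apply cpath_const; auto | split; auto].
  intros t Ht. destruct (Hr t Ht) as [q [Hq <-]].
  unfold theta; rewrite (Hp 0%nat), (Hq 0%nat); auto.
Qed.

Lemma continuous_split_lengths (mA LA mB LB x0 y0 : R) (alpha : R -> R) :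
  cont01 alpha -> 0 < x0 -> 0 < y0 -> mA <= x0 <= LA -> mB <= y0 <= LB ->
  Rabs (x0 - y0) <= alpha 0 <= x0 + y0 ->
  (forall t, in01 t -> exists x y,
     mA <= x <= LA /\ mB <= y <= LB /\ Rabs (x - y) <= alpha t <= x + y) ->
  exists b1 b2, cont01 b1 /\ cont01 b2 /\ b1 0 = x0 /\ b2 0 = y0 /\
    forall t, in01 t -> mA <= b1 t <= LA /\ mB <= b2 t <= LB /\ 0 < b1 t /\ 0 < b2 t /\
      Rabs (b1 t - b2 t) <= alpha t <= b1 t + b2 t.
Proof.
  intros Ha Hx0 Hy0 HxA HyB H0 Feas.
  (* clamp [x0] to the lengths of the first part that the second part can
     complement to [alpha t], then clamp [y0] likewise given [b1 t] *)
  set (b1 := fun t => clamp (Rmax mA (Rmax (alpha t - LB) (mB - alpha t)))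
                            (Rmin LA (alpha t + LB)) x0).
  set (b2 := fun t => clamp (Rmax mB (Rabs (alpha t - b1 t))) (Rmin LB (alpha t + b1 t)) y0).
  destruct H0 as [H0' H0]. apply Rabs_le_inv in H0'.
  assert (Hb10 : b1 0 = x0)
    by (apply clamp_id; split; [apply Rmax_lub; [| apply Rmax_lub] | apply Rmin_glb]; lra).
  exists b1, b2. split; [|split; [|split; [|split]]]; auto.
  - apply cont01_clamp; cont01_tac.
  - apply cont01_clamp; cont01_tac.
  - unfold b2; rewrite Hb10. apply clamp_id.
    split; [apply Rmax_lub; [lra | apply Rabs_le; lra] | apply Rmin_glb; lra].
  - intros t Ht. destruct (Feas t Ht) as [x [y [Fx [Fy Ft]]]].
    destruct Ft as [Ft1 Ft2]. apply Rabs_le_inv in Ft1.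
    assert (Hlo1 : Rmax mA (Rmax (alpha t - LB) (mB - alpha t)) <= Rmin LA (alpha t + LB))
      by (apply Rmax_lub; [| apply Rmax_lub]; apply Rmin_glb; lra).
    destruct (clamp_bounds _ _ x0 Hlo1) as [L1 U1]. fold (b1 t) in L1, U1.
    apply Rmax_le_inv in L1 as [L1a L1b]. apply Rmax_le_inv in L1b as [L1b L1c].
    apply Rmin_ge_inv in U1 as [U1a U1b].
    assert (P1 : 0 < b1 t) by (apply clamp_pos; auto; apply Rmin_glb_lt; lra).
    assert (Hlo2 : Rmax mB (Rabs (alpha t - b1 t)) <= Rmin LB (alpha t + b1 t))
      by (apply Rmax_lub; apply Rmin_glb; try lra; apply Rabs_le; lra).
    destruct (clamp_bounds _ _ y0 Hlo2) as [L2 U2]. fold (b2 t) in L2, U2.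
    apply Rmax_le_inv in L2 as [L2a L2b]. apply Rmin_ge_inv in U2 as [U2a U2b].
    apply Rabs_le_inv in L2b.
    assert (P2 : 0 < b2 t) by (apply clamp_pos; auto; apply Rmin_glb_lt; lra).
    repeat split; try lra. apply Rabs_le; lra.
Qed.

Lemma theta_split_bounds n j l q :
  (j <= n)%nat -> lengths_pos n l -> inC n l q ->
  let x := theta j q in let y := theta (n - j) (shiftp j q) in
  min_reach j l <= x <= total_length j l /\
  min_reach (n - j) (shiftl j l) <= y <= total_length (n - j) (shiftl j l) /\
  Rabs (x - y) <= theta n q <= x + y.
Proof.
  intros Hj Hl Hq x y.
  split; [apply theta_bounds; [eapply lengths_pos_le | eapply inC_prefix]; eauto|].
  split; [apply theta_bounds; [apply lengths_pos_shiftl | apply inC_suffix]; auto|].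
  assert (Ex : x = vnorm (vsub (q j) (q 0%nat))) by apply theta_vnorm.
  assert (Ey : y = vnorm (vsub (q n) (q j)))
    by (unfold y; rewrite theta_shiftp, Nat.sub_add by lia; auto).
  rewrite (theta_split n j q), Ex, Ey.
  split; [apply vnorm_add_ge | apply vnorm_add_le].
Qed.

Lemma lifts_glue j nB l p alpha b1 b2 qA qB :
  (1 <= nB)%nat -> cont01 alpha -> cont01 b1 -> cont01 b2 ->
  (forall t, in01 t -> 0 < b1 t /\ 0 < b2 t /\ Rabs (b1 t - b2 t) <= alpha t <= b1 t + b2 t) ->
  alpha 0 = theta (j + nB) p ->
  lifts j l p b1 qA -> lifts nB (shiftl j l) (shiftp j p) b2 qB ->
  exists q, lifts (j + nB) l p alpha q.
Proof.
  intros HnB Hal Cb1 Cb2 B H0 [[QA1 QA2] [QA3 QA4]] [[QB1 QB2] [QB3 QB4]].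
  set (aV := fun t => vsub (qA t j) (qA t 0%nat)).
  set (bV := fun t => vsub (qB t nB) (qB t 0%nat)).
  assert (HaV : forall t, in01 t -> vnorm (aV t) = b1 t)
    by (intros t Ht; unfold aV; rewrite <- theta_vnorm; auto).
  assert (HbV : forall t, in01 t -> vnorm (bV t) = b2 t)
    by (intros t Ht; unfold bV; rewrite <- theta_vnorm; auto).
  set (rho := fun t => align (aV t) (bV t) (b1 t) (b2 t) (alpha t) (orientation (aV 0) (bV 0))).
  assert (Rho : forall t, in01 t -> fst (rho t) ^ 2 + snd (rho t) ^ 2 = 1 /\
                  vnorm (vadd (aV t) (rot (fst (rho t)) (snd (rho t)) (bV t))) = alpha t).
  { intros t Ht. destruct (B t Ht) as [P1 [P2 P3]].
    apply align_spec; auto; apply orientation_pow2. }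
  assert (Crho : cont01_pt rho).
  { apply cont01_align; auto.
    - apply cont01_vsub; apply QA2; lia.
    - apply cont01_vsub; apply QB2; lia.
    - intros t Ht; split; apply B; auto.
    - intros t Ht; apply cos_law_bound; apply B; auto. }
  exists (fun t => glue j (qA t) (qB t) (fst (rho t)) (snd (rho t))). split; [|split].
  - apply cpath_glue; try split; auto; try apply Crho. intros; apply Rho; auto.
  - assert (H00 : in01 0) by (unfold in01; lra).
    assert (E0 : alpha 0 = vnorm (vadd (aV 0) (bV 0))).
    { rewrite H0, (theta_split _ j). unfold aV, bV.
      rewrite !QA3, !QB3 by lia. unfold shiftp. rewrite Nat.add_comm; auto. }
    assert (Erho : rho 0 = (1, 0)) by (unfold rho; rewrite E0; apply align_actual; auto; apply B; auto).
    rewrite Erho. apply glue_1_0; [intros; apply QA3; lia | intros i Hi; rewrite QB3 by lia; auto].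
  - intros t Ht. rewrite glue_theta by lia. apply Rho; auto.
Qed.

Lemma liftable_split n j :
  (1 <= j)%nat -> (j < n)%nat -> liftable j -> liftable (n - j) ->
  forall l p alpha, lengths_pos n l -> inC n l p -> cont01 alpha ->
  (forall t, in01 t -> range_P n l (alpha t)) -> alpha 0 = theta n p ->
  p j <> p 0%nat -> p j <> p n -> exists q, lifts n l p alpha q.
Proof.
  intros Hj1 Hjn liftA liftB l p alpha Hl Hp Hal Hr H0 Hj0 Hjn'.
  set (nB := (n - j)%nat) in *.
  assert (HlA : lengths_pos j l) by (apply (lengths_pos_le n); auto; lia).
  assert (HlB : lengths_pos nB (shiftl j l)) by (apply lengths_pos_shiftl; auto; lia).
  destruct (theta_split_bounds n j l p) as [FA [FB F0]]; auto; try lia. fold nB in FB, F0.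
  assert (Hx0 : 0 < theta j p) by (rewrite theta_vnorm; apply vnorm_vsub_pos; auto).
  assert (Hy0 : 0 < theta nB (shiftp j p))
    by (unfold nB; rewrite theta_shiftp, Nat.sub_add by lia; apply vnorm_vsub_pos; auto).
  rewrite <- H0 in F0.
  destruct (continuous_split_lengths (min_reach j l) (total_length j l)
              (min_reach nB (shiftl j l)) (total_length nB (shiftl j l))
              (theta j p) (theta nB (shiftp j p)) alpha) as [b1 [b2 [Cb1 [Cb2 [Hb10 [Hb20 B]]]]]]; auto.
  { intros t Ht. destruct (Hr t Ht) as [q [Hq <-]].
    destruct (theta_split_bounds n j l q) as [A [B C]]; auto; try lia. eauto. }
  destruct (liftA l p b1 HlA (inC_prefix n j l p ltac:(lia) Hp) Cb1) as [qA HqA]; auto.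
  { intros t Ht; apply range_P_of_bounds; auto; apply B; auto. }
  destruct (liftB (shiftl j l) (shiftp j p) b2 HlB (inC_suffix n j l p ltac:(lia) Hp) Cb2)
    as [qB HqB]; auto.
  { intros t Ht; apply range_P_of_bounds; auto; apply B; auto. }
  replace n with (j + nB)%nat in H0 |- * by lia.
  apply (lifts_glue j nB l p alpha b1 b2 qA qB); auto; [lia|]. intros t Ht; apply B; auto.
Qed.

(* The folded chain used when every inner vertex sits on a terminal.  In units
   of the common length of the first and last edge, and in the frame where the
   first edge is [(1, 0)], the middle part spans [- mid_len x * (mid_cos x, mid_sin x)]
   and the last edge is [(1, 0)] turned by twice the angle of [half_cos x].  For
   [x <= 1] the middle and last edges turn together, for [1 <= x <= 3] only the
   middle part turns, and beyond [3] the middle part is stretched straight. *)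
Definition mid_cos (x : R) : R := Rmax (-1) (Rmin ((x + 1) / 2) ((5 - x ^ 2) / 4)).
Definition mid_sin (x : R) : R := sqrt (1 - mid_cos x ^ 2).
Definition mid_len (x : R) : R := Rmax 1 (x - 2).
Definition half_cos (x : R) : R := Rmin 1 ((x + 1) / 2).
Definition half_sin (x : R) : R := sqrt (1 - half_cos x ^ 2).
Definition last_cos (x : R) : R := 2 * half_cos x ^ 2 - 1.
Definition last_sin (x : R) : R := 2 * half_cos x * half_sin x.

Lemma mid_cos_bound x : 0 <= x -> -1 <= mid_cos x <= 1.
Proof.
  intros. unfold mid_cos. split; [apply Rmax_l | apply Rmax_lub; [lra|]].
  destruct (Rle_dec x 1); [eapply Rle_trans; [apply Rmin_l | lra] | eapply Rle_trans; [apply Rmin_r | nra]].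
Qed.

Lemma half_cos_bound x : 0 <= x -> -1 <= half_cos x <= 1.
Proof. intros. unfold half_cos. split; [apply Rmin_glb; lra | apply Rmin_l]. Qed.

Lemma mid_cos_sin x : 0 <= x -> mid_cos x ^ 2 + mid_sin x ^ 2 = 1.
Proof. intros; apply cos_sqrt_pow2, mid_cos_bound; auto. Qed.

Lemma half_cos_sin x : 0 <= x -> half_cos x ^ 2 + half_sin x ^ 2 = 1.
Proof. intros; apply cos_sqrt_pow2, half_cos_bound; auto. Qed.

Lemma last_cos_sin x : 0 <= x -> last_cos x ^ 2 + last_sin x ^ 2 = 1.
Proof.
  intros Hx. pose proof (half_cos_sin x Hx). unfold last_cos, last_sin.
  transitivity (1 + 4 * half_cos x ^ 2 * (half_cos x ^ 2 + half_sin x ^ 2 - 1)); [ring|].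
  rewrite H; ring.
Qed.

Lemma fold_chain_length x : 0 <= x ->
  (1 - mid_len x * mid_cos x + last_cos x) ^ 2 + (- mid_len x * mid_sin x + last_sin x) ^ 2 = x ^ 2.
Proof.
  intros Hx. pose proof (mid_cos_sin x Hx) as Hm. unfold last_cos, last_sin.
  assert (Sqrt0 : sqrt (1 - 1 ^ 2) = 0) by (replace (1 - 1 ^ 2) with 0 by ring; apply sqrt_0).
  destruct (Rle_dec x 1) as [h1|h1]; [|destruct (Rle_dec x 3) as [h3|h3]].
  - assert (Ec : mid_cos x = (x + 1) / 2)
      by (unfold mid_cos; rewrite Rmin_left, Rmax_right by nra; auto).
    assert (Eh : half_cos x = (x + 1) / 2) by (unfold half_cos; rewrite Rmin_right by lra; auto).
    assert (Es : half_sin x = mid_sin x) by (unfold half_sin, mid_sin; rewrite Ec, Eh; auto).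
    assert (El : mid_len x = 1) by (unfold mid_len; rewrite Rmax_left by lra; auto).
    rewrite El, Es, Eh. rewrite Ec in Hm.
    transitivity ((2 * ((x + 1) / 2) - 1) ^ 2 * (((x + 1) / 2) ^ 2 + mid_sin x ^ 2)); [rewrite Ec; ring|].
    rewrite Hm; field.
  - assert (Ec : mid_cos x = (5 - x ^ 2) / 4)
      by (unfold mid_cos; rewrite Rmin_right, Rmax_right by nra; auto).
    assert (Eh : half_cos x = 1) by (unfold half_cos; rewrite Rmin_left by lra; auto).
    assert (El : mid_len x = 1) by (unfold mid_len; rewrite Rmax_left by lra; auto).
    assert (Es : half_sin x = 0) by (unfold half_sin; rewrite Eh; auto).
    rewrite El, Es, Eh. rewrite Ec in Hm |- *.
    transitivity (5 - 4 * ((5 - x ^ 2) / 4) + (((5 - x ^ 2) / 4) ^ 2 + mid_sin x ^ 2 - 1)); [ring|].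
    rewrite Hm; field.
  - assert (Ec : mid_cos x = -1) by (unfold mid_cos; rewrite Rmin_right, Rmax_left by nra; auto).
    assert (Eh : half_cos x = 1) by (unfold half_cos; rewrite Rmin_left by lra; auto).
    assert (El : mid_len x = x - 2) by (unfold mid_len; rewrite Rmax_right by lra; auto).
    assert (Es : half_sin x = 0) by (unfold half_sin; rewrite Eh; auto).
    assert (Em : mid_sin x = 0)
      by (unfold mid_sin; rewrite Ec; replace (1 - (-1) ^ 2) with 0 by ring; apply sqrt_0).
    rewrite El, Es, Em, Eh, Ec; ring.
Qed.

Lemma fold_chain_at_1 :
  mid_cos 1 = 1 /\ mid_sin 1 = 0 /\ mid_len 1 = 1 /\ last_cos 1 = 1 /\ last_sin 1 = 0.
Proof.
  assert (Ec : mid_cos 1 = 1)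
    by (unfold mid_cos; rewrite Rmin_left, Rmax_right; lra).
  assert (Eh : half_cos 1 = 1) by (unfold half_cos; rewrite Rmin_left; lra).
  assert (Sqrt0 : sqrt (1 - 1 ^ 2) = 0) by (replace (1 - 1 ^ 2) with 0 by ring; apply sqrt_0).
  unfold mid_sin, last_cos, last_sin, half_sin, mid_len. rewrite Ec, Eh, Sqrt0, Rmax_left by lra.
  repeat split; ring.
Qed.

Lemma cont01_fold_chain x : cont01 x -> (forall t, in01 t -> 0 <= x t) ->
  cont01 (fun t => mid_cos (x t)) /\ cont01 (fun t => mid_sin (x t)) /\
  cont01 (fun t => last_cos (x t)) /\ cont01 (fun t => last_sin (x t)).
Proof.
  intros Hx Hx0.
  assert (Cm : cont01 (fun t => mid_cos (x t))).
  { unfold mid_cos. cont01_tac; apply cont01_div; cont01_tac; intros; lra. }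
  assert (Ch : cont01 (fun t => half_cos (x t))).
  { unfold half_cos. cont01_tac; apply cont01_div; cont01_tac; intros; lra. }
  assert (Chs : cont01 (fun t => half_sin (x t))).
  { apply cont01_sqrt; [cont01_tac | intros; apply one_minus_pow2_ge0, half_cos_bound; auto]. }
  split; [auto | split; [| split]].
  - apply cont01_sqrt; [cont01_tac | intros; apply one_minus_pow2_ge0, mid_cos_bound; auto].
  - unfold last_cos; cont01_tac.
  - unfold last_sin; cont01_tac.
Qed.

Lemma vnorm_fold_chain U d x : vnorm U = d -> 0 < d -> 0 <= x ->
  vnorm (vadd (vadd U (vscal (d * mid_len x) (rot (- mid_cos x) (- mid_sin x) (vscal (/ d) U))))
              (rot (last_cos x) (last_sin x) U)) = d * x.
Proof.
  intros HU Hd Hx. apply vnorm_eq; [nra|].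
  set (u := vscal (/ d) U). rewrite <- (vscal_Vr U d) by lra. fold u.
  assert (Hu : vnorm2 u = 1) by (apply vnorm2_unit; auto).
  transitivity (vnorm2 (vscal d (rot (1 - mid_len x * mid_cos x + last_cos x)
                                     (- mid_len x * mid_sin x + last_sin x) u))).
  { f_equal; unfold vadd, vscal, rot; simpl; f_equal; ring. }
  rewrite vnorm2_scal, vnorm2_rot, Hu, fold_chain_length by auto; ring.
Qed.

Lemma folded_chain nM l p :
  let n := (1 + nM + 1)%nat in
  lengths_pos n l -> inC n l p -> p 1%nat = p n -> p (1 + nM)%nat = p 0%nat ->
  0 < theta n p /\ theta nM (shiftp 1 p) = theta n p /\
  total_length n l = 2 * theta n p + total_length nM (shiftl 1 l).
Proof.
  intros n Hl Hp E1 E2.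
  assert (En : n = (1 + nM + 1)%nat) by reflexivity. clearbody n.
  assert (Hl0 : l 0%nat = theta n p).
  { rewrite <- (Hp 0%nat), dist2_vnorm, E1, theta_vnorm by lia; reflexivity. }
  assert (Hln : l (1 + nM)%nat = theta n p).
  { rewrite <- (Hp (1 + nM)%nat) by lia. replace (S (1 + nM)) with n by lia.
    rewrite dist2_vnorm, E2, theta_vnorm; reflexivity. }
  split; [rewrite <- Hl0; apply Hl; lia | split].
  - rewrite theta_shiftp, theta_vnorm, Nat.add_comm, E1, E2.
    apply vnorm_eq_vnorm2. unfold vnorm2, vsub; simpl; ring.
  - rewrite En at 1. rewrite Nat.add_1_r.
    change (total_length (S (1 + nM)) l) with (total_length (1 + nM) l + l (1 + nM)%nat).
    rewrite total_length_add, Hln; simpl; rewrite Hl0; ring.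
Qed.

(* The first edge of [p], then the chain [qM] turned by [(c, s)], then the last
   edge of [p] turned by [(e1, e2)]. *)
Definition glue3 (nM : nat) (p qM : config) (c s e1 e2 : R) : config :=
  glue (1 + nM) (glue 1 p qM c s) (shiftp (1 + nM) p) e1 e2.

Lemma cpath_glue3 nM l p qM c s e1 e2 :
  inC (1 + nM + 1) l p -> cpath nM (shiftl 1 l) qM ->
  cont01 c -> cont01 s -> cont01 e1 -> cont01 e2 ->
  (forall t, in01 t -> c t ^ 2 + s t ^ 2 = 1 /\ e1 t ^ 2 + e2 t ^ 2 = 1) ->
  cpath (1 + nM + 1) l (fun t => glue3 nM p (qM t) (c t) (s t) (e1 t) (e2 t)).
Proof.
  intros Hp HqM Hc Hs He1 He2 Hrot.
  unfold glue3. apply cpath_glue; [apply cpath_glue | apply cpath_const | auto | auto |].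
  - apply cpath_const, (inC_prefix (1 + nM + 1)); auto; lia.
  - exact HqM.
  - exact Hc.
  - exact Hs.
  - intros; apply Hrot; auto.
  - replace 1%nat with (1 + nM + 1 - (1 + nM))%nat at 1 by lia. apply inC_suffix; auto; lia.
  - intros; apply Hrot; auto.
Qed.

Lemma glue3_1_0 nM p qM :
  (forall i, (i <= nM)%nat -> qM i = p (i + 1)%nat) ->
  forall i, (i <= 1 + nM + 1)%nat -> glue3 nM p qM 1 0 1 0 i = p i.
Proof.
  intros HqM. apply glue_1_0; [|intros; reflexivity]. apply glue_1_0; auto.
Qed.

Lemma theta_glue3 nM p qM c s e1 e2 :
  (1 <= nM)%nat ->
  theta (1 + nM + 1) (glue3 nM p qM c s e1 e2) =
  vnorm (vadd (vadd (vsub (p 1%nat) (p 0%nat)) (rot c s (vsub (qM nM) (qM 0%nat))))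
              (rot e1 e2 (vsub (p (1 + nM + 1)%nat) (p (1 + nM)%nat)))).
Proof.
  intros H. unfold glue3. rewrite glue_theta, (glue_le _ _ _ _ _ 0), glue_gt by lia.
  replace (1 + nM - 1)%nat with nM by lia. unfold shiftp.
  replace (1 + (1 + nM))%nat with (1 + nM + 1)%nat by lia.
  f_equal; unfold vadd, vsub; simpl; f_equal; ring.
Qed.

Lemma lifts_fold nM l p alpha x qM :
  let n := (1 + nM + 1)%nat in let d := theta n p in
  (1 <= nM)%nat -> inC n l p -> p 1%nat = p n -> p (1 + nM)%nat = p 0%nat -> 0 < d ->
  cont01 x -> (forall t, in01 t -> 0 <= x t) -> x 0 = 1 ->
  (forall t, in01 t -> alpha t = d * x t) ->
  lifts nM (shiftl 1 l) (shiftp 1 p) (fun t => d * mid_len (x t)) qM ->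
  exists q, lifts n l p alpha q.
Proof.
  intros n d HnM Hp E1 E2 Hd Cx Hx Hx0 Ha [[QM1 QM2] [QM3 QM4]].
  assert (En : n = (1 + nM + 1)%nat) by reflexivity. clearbody n.
  set (U := vsub (p n) (p 0%nat)).
  assert (HU : vnorm U = d) by (symmetry; apply theta_vnorm).
  destruct fold_chain_at_1 as [Hmc1 [Hms1 [Hmid1 [Hlc1 Hls1]]]].
  destruct (cont01_fold_chain x Cx Hx) as [Cmc [Cms [Clc Cls]]].
  set (b2 := fun t => d * mid_len (x t)) in *.
  assert (Hb2 : forall t, in01 t -> 0 < b2 t).
  { intros t Ht. unfold b2, mid_len; pose proof (Rmax_l 1 (x t - 2)); nra. }
  set (bV := fun t => vsub (qM t nM) (qM t 0%nat)).
  set (D := fun t => rot (- mid_cos (x t)) (- mid_sin (x t)) (vscal (/ d) U)).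
  set (rho := fun t => rot_onto (bV t) (b2 t) (D t)).
  assert (Rho : forall t, in01 t -> fst (rho t) ^ 2 + snd (rho t) ^ 2 = 1 /\
                  rot (fst (rho t)) (snd (rho t)) (bV t) = vscal (b2 t) (D t)).
  { intros t Ht. apply rot_onto_spec; auto; [unfold bV; rewrite <- theta_vnorm; auto|].
    unfold D. rewrite vnorm2_rot, vnorm2_unit, Rmult_1_r by auto.
    rewrite <- (mid_cos_sin (x t)) by auto; ring. }
  assert (Crho : cont01_pt rho).
  { apply cont01_rot_onto; auto; [apply cont01_vsub; apply QM2; lia | unfold b2, mid_len; cont01_tac |].
    apply cont01_rot; try apply cont01_opp; auto; apply cont01_pt_const. }
  exists (fun t => glue3 nM p (qM t) (fst (rho t)) (snd (rho t)) (last_cos (x t)) (last_sin (x t))).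
  rewrite En. split; [|split].
  - apply cpath_glue3; [rewrite <- En | split | apply Crho | apply Crho | | |
      intros t Ht; split; [apply Rho | apply last_cos_sin]]; auto.
  - assert (H01 : in01 0) by (unfold in01; lra).
    assert (Hrho0 : rho 0 = (1, 0)).
    { assert (ED : D 0 = vscal (/ b2 0) (bV 0)).
      { unfold D, b2, bV. rewrite Hx0, Hmc1, Hms1, Hmid1, Rmult_1_r, !QM3 by lia. unfold shiftp.
        rewrite (Nat.add_comm nM 1). simpl (0 + 1)%nat. rewrite E2, E1.
        unfold U, rot, vscal, vsub; simpl; f_equal; ring. }
      unfold rho. rewrite ED. apply rot_onto_self; [unfold bV; rewrite <- theta_vnorm|]; auto. }
    rewrite Hrho0, Hx0, Hlc1, Hls1. apply glue3_1_0; auto.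
  - intros t Ht. rewrite theta_glue3 by lia. fold (bV t).
    rewrite <- En, E1, E2, (proj2 (Rho t Ht)), Ha, <- (vnorm_fold_chain U d (x t)) by auto.
    reflexivity.
Qed.

Lemma liftable_fold nM :
  (1 <= nM)%nat -> liftable nM ->
  let n := (1 + nM + 1)%nat in
  forall l p alpha, lengths_pos n l -> inC n l p -> cont01 alpha ->
  (forall t, in01 t -> range_P n l (alpha t)) -> alpha 0 = theta n p ->
  p 1%nat = p n -> p (1 + nM)%nat = p 0%nat -> exists q, lifts n l p alpha q.
Proof.
  intros HnM liftM n l p alpha Hl Hp Hal Hr H0 E1 E2.
  assert (En : n = (1 + nM + 1)%nat) by reflexivity.
  destruct (folded_chain nM l p) as [Hd [HthM HLn]]; auto. fold n in Hd, HthM, HLn.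
  set (d := theta n p) in *.
  assert (HlM : lengths_pos nM (shiftl 1 l)) by (intros i Hi; apply Hl; lia).
  assert (HpM : inC nM (shiftl 1 l) (shiftp 1 p))
    by (apply (inC_prefix (n - 1)); [lia | apply inC_suffix; auto; lia]).
  pose proof (theta_bounds nM _ _ HlM HpM) as HM. rewrite HthM in HM.
  assert (Ha : forall t, in01 t -> 0 <= alpha t <= 2 * d + total_length nM (shiftl 1 l)).
  { intros t Ht. apply (range_P_iff n l (alpha t) Hl) in Hr; auto.
    pose proof (min_reach_bounds n l Hl). lra. }
  set (x := fun t => alpha t / d).
  assert (Hx : forall t, in01 t -> 0 <= x t)
    by (intros t Ht; apply Rmult_le_pos; [apply Ha | apply Rlt_le, Rinv_0_lt_compat]; auto).
  assert (Cx : cont01 x) by (apply cont01_div; cont01_tac; intros; lra).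
  destruct (liftM (shiftl 1 l) (shiftp 1 p) (fun t => d * mid_len (x t))) as [qM HqM]; auto.
  { unfold mid_len; cont01_tac. }
  { intros t Ht. apply range_P_of_bounds; auto. specialize (Ha t Ht).
    unfold mid_len, x. rewrite <- RmaxRmult, Rmult_1_r by lra.
    replace (d * (alpha t / d - 2)) with (alpha t - 2 * d) by (field; lra).
    split; [eapply Rle_trans; [|apply Rmax_l]; lra | apply Rmax_lub; lra]. }
  { unfold x. rewrite H0, HthM. replace (d / d) with 1 by (field; lra).
    unfold mid_len; rewrite Rmax_left; lra. }
  apply (lifts_fold nM l p alpha x qM); auto; unfold x, d, n in *.
  - rewrite H0; field; lra.
  - intros t Ht; field; lra.
Qed.

Lemma inC_edge_neq n l p i : lengths_pos n l -> inC n l p -> (i < n)%nat -> p (S i) <> p i.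
Proof.
  intros Hl Hp Hi E. pose proof (Hp i Hi) as H. rewrite E, dist2_self in H.
  pose proof (Hl i Hi). lra.
Qed.

Lemma liftable_all n : (1 <= n)%nat -> liftable n.
Proof.
  induction n as [n IH] using (well_founded_induction Wf_nat.lt_wf). intros Hn.
  destruct (Nat.eq_dec n 1) as [->|Hn1]; [apply liftable_1|].
  intros l p alpha Hl Hp Hal Hr H0.
  destruct (classic (exists j, (1 <= j < n)%nat /\ p j <> p 0%nat /\ p j <> p n))
    as [[j [Hj [Hj0 Hjn]]]|Hno].
  - apply (liftable_split n j); auto; try lia; apply IH; lia.
  - assert (Hon : forall j, (1 <= j < n)%nat -> p j = p 0%nat \/ p j = p n).
    { intros j Hj. destruct (classic (p j = p 0%nat)); auto.
      destruct (classic (p j = p n)); auto. exfalso; eauto. }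
    assert (E1 : p 1%nat = p n).
    { destruct (Hon 1%nat) as [E|E]; auto; [lia|].
      exfalso; apply (inC_edge_neq n l p 0); auto; lia. }
    assert (E2 : p (n - 1)%nat = p 0%nat).
    { destruct (Hon (n - 1)%nat) as [E|E]; auto; [lia|].
      exfalso; apply (inC_edge_neq n l p (n - 1)); auto; [lia|].
      replace (S (n - 1)) with n by lia; auto. }
    assert (Hn3 : (3 <= n)%nat).
    { destruct (Nat.eq_dec n 2) as [->|]; [|lia].
      simpl in E2. exfalso; apply (inC_edge_neq 2 l p 0); auto; congruence. }
    replace (n - 1)%nat with (1 + (n - 2))%nat in E2 by lia.
    replace n with (1 + (n - 2) + 1)%nat in Hl, Hp, Hr, H0, E1 |- * by lia.
    apply liftable_fold; auto; [lia | apply IH; lia].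
Qed.

Theorem mainTheorem9 (k : nat) (l : nat -> R) (p : config) (alpha : R -> R) :
  (2 <= k)%nat ->
  (forall i, (i < k)%nat -> 0 < l i) ->
  inC k l p ->
  cont01 alpha ->
  (forall t, 0 <= t <= 1 -> range_P k l (alpha t)) ->
  alpha 0 = theta k p ->
  exists alt : R -> config,
    contM k l alt /\ congruent k p (alt 0) /\
    (forall t, 0 <= t <= 1 -> theta k (alt t) = alpha t).
Proof.
  intros Hk Hl Hp Hal Hr H0.
  destruct (liftable_all k ltac:(lia) l p alpha) as [q [Hq [Hq0 Hqt]]]; auto.
  exists q. split; [apply cpath_contM; auto | split; auto].
  exists 1, 0, 0, 0. split; [ring|].
  intros i Hi. rewrite Hq0 by auto. unfold se2_act. destruct (p i); simpl; f_equal; ring.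
Qed.
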